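(* If $x\in\Gamma_s$, then for all $i,j,k,l$ in the same connected component of $G_x$ such that $x_{ij}>0$ and $x_{kl}>0$, we have $a_{ij}p_{ij}=a_{kl}p_{kl}$.
   Context: Let $G=(\mathbb{V},E)$ be a finite graph with adjacency $\sim$ and edge set $E$. Let $a_{ij}=a_{ji}\ge0$ ($>0$ only if $i\sim j$) and $p_{ij}=p_{ji}\in[0,1]$ ($=0$ if $i\not\sim j$), with some $a_{ij}p_{ij}>0$. Fix $h_1\in(0,1]$; $\Delta$ is the set of arrays $x=(x_{ij})$ with $x_{ij}=x_{ji}\ge0$, $x_{ij}=0$ if $i\not\sim j$, $\sum_{i,j}x_{ij}=1$, $\sum_{(i,j):a_{ij}p_{ij}>0}x_{ij}\ge h_1$; $x_i=\sum_jx_{ij}$. $\partial\Delta$: the $x\in\Delta$ for which some vertex $i$ having a neighbour $j$ with $a_{ij}p_{ij}>0$ has $\sum_{j:a_{ij}p_{ij}>0}x_{ij}=0$. $H(x)=\sum_{(i,j):x_{ij}>0}a_{ij}p_{ij}x_{ij}^2/(x_ix_j)$; $y_{ij}=a_{ij}p_{ij}x_{ij}/(x_ix_j)$ ($0$ if $a_{ij}p_{ij}=0$); $F(x)_{ij}=x_{ij}(y_{ij}-H(x))$ ($0$ if $x_{ij}=0$); $\Gamma=\{x\in\Delta:F(x)=0\}$, $\Gamma_0=\Gamma\cap(\Delta\setminus\partial\Delta)$. For $x\in\Gamma_0$, $J(x)$ is the Jacobian (indexed by pairs of edges) of $(x_e)_{e\in E}\mapsto(F_e(x))_{e\in E}$,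 with $x_{ij}=x_{ji}=x_e$ for $e=\{i,j\}$, $x_i=\sum_jx_{ij}$, the formulas for $H$ (terms with $a_{ij}p_{ij}>0$) and $F$ regarded as smooth functions of the unconstrained variables near $x$. $\Gamma_s$ is the set of $x\in\Gamma_0$ such that all eigenvalues of $J(x)$ have nonpositive real part (linearly stable equilibria). $G_x$ is the subgraph with vertex set $\mathbb{V}$ and $i,j$ adjacent iff $x_{ij}>0$. *)

From HB Require Import structures.
From mathcomp Require Import all_boot all_order all_algebra.
From mathcomp Require Import all_classical all_reals all_analysis.
From mathcomp Require Import complex.
Set Implicit Arguments. Unset Strict Implicit. Unset Printing Implicit Defensive.
Import Order.TTheory GRing.Theory Num.Theory.
Import numFieldNormedType.Exports.
Local Open Scope ring_scope.

Section Defs.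
Variables (R : realType) (T : finType).

Definition simple_graph (adj : rel T) : Prop :=
  (forall i, ~~ adj i i) /\ (forall i j, adj i j = adj j i).

Definition weights_ok (adj : rel T) (a p : T -> T -> R) : Prop :=
  [/\ forall i j, a i j = a j i,
      forall i j, 0 <= a i j &
      forall i j, 0 < a i j -> adj i j] /\
  [/\ forall i j, p i j = p j i,
      forall i j, 0 <= p i j <= 1,
      forall i j, ~~ adj i j -> p i j = 0 &
      exists i j, 0 < a i j * p i j].

Definition xv (x : T -> T -> R) (i : T) : R := \sum_j x i j.

Definition inDelta (adj : rel T) (a p : T -> T -> R) (h1 : R)
    (x : T -> T -> R) : Prop :=
  [/\ forall i j, x i j = x j i,
      forall i j, 0 <= x i j,
      forall i j, ~~ adj i j -> x i j = 0,
      \sum_i \sum_j x i j = 1 &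
      h1 <= \sum_i \sum_(j | 0 < a i j * p i j) x i j].

Definition inBoundary (a p : T -> T -> R) (x : T -> T -> R) : Prop :=
  exists i, (exists j, 0 < a i j * p i j) /\
            \sum_(j | 0 < a i j * p i j) x i j = 0.

Definition Hf (a p : T -> T -> R) (x : T -> T -> R) : R :=
  \sum_i \sum_(j | 0 < x i j) a i j * p i j * x i j ^+ 2 / (xv x i * xv x j).

Definition yf (a p : T -> T -> R) (x : T -> T -> R) (i j : T) : R :=
  if 0 < a i j * p i j then a i j * p i j * x i j / (xv x i * xv x j) else 0.

Definition Ff (a p : T -> T -> R) (x : T -> T -> R) (i j : T) : R :=
  if x i j == 0 then 0 else x i j * (yf a p x i j - Hf a p x).

Definition inGamma adj a p h1 x : Prop :=
  inDelta adj a p h1 x /\ forall i j, Ff a p x i j = 0.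

Definition inGamma0 adj a p h1 x : Prop :=
  inGamma adj a p h1 x /\ ~ inBoundary a p x.

Definition is_edge (adj : rel T) (e : {set T}) : bool :=
  [exists i, exists j, adj i j && (e == [set i; j])].

Definition edge (adj : rel T) := {e : {set T} | is_edge adj e}.

Definition nE (adj : rel T) : nat := #|{: edge adj}|.

Definition edge_set (adj : rel T) (k : 'I_(nE adj)) : {set T} :=
  val (enum_val k).

(* value at the edge e of an array f, read off at the endpoints i, j of e
   (taken once, with i listed before j in the enumeration of T) *)
Definition at_edge (f : T -> T -> R) (e : {set T}) : R :=
  \sum_i \sum_(j | ([set i; j] == e) && (enum_rank i < enum_rank j)%N) f i j.

(* the point x in the unconstrained edge variables (x_e)_{e in E} *)
Definition xvec (adj : rel T) (x : T -> T -> R) : 'rV[R]_(nE adj) :=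
  \row_k at_edge x (edge_set k).

Definition zarr (adj : rel T) (z : 'rV[R]_(nE adj)) (i j : T) : R :=
  \sum_(k < nE adj | edge_set k == [set i; j]) z 0 k.

(* H, y and F as smooth functions of the unconstrained variables
   (H only has the terms with a_ij p_ij > 0). *)
Definition Hs (adj : rel T) (a p : T -> T -> R) (z : 'rV[R]_(nE adj)) : R :=
  \sum_i \sum_(j | 0 < a i j * p i j)
     a i j * p i j * zarr z i j ^+ 2 / (xv (zarr z) i * xv (zarr z) j).

Definition ys (adj : rel T) (a p : T -> T -> R) (z : 'rV[R]_(nE adj)) (i j : T) : R :=
  if 0 < a i j * p i j
  then a i j * p i j * zarr z i j / (xv (zarr z) i * xv (zarr z) j) else 0.

Definition Fs (adj : rel T) (a p : T -> T -> R) (z : 'rV[R]_(nE adj))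
    : 'rV[R]_(nE adj) :=
  \row_k at_edge (fun i j => zarr z i j * (ys a p z i j - Hs a p z)) (edge_set k).

Definition Jac (adj : rel T) (a p : T -> T -> R) (z : 'rV[R]_(nE adj))
    : 'M[R]_(nE adj) :=
  \matrix_(k, l) ('D_(delta_mx 0 l) (Fs a p) z) 0 k.

Definition inGammaS adj a p h1 x : Prop :=
  inGamma0 adj a p h1 x /\
  forall lam : R[i],
    eigenvalue (map_mx (fun r : R => r%:C%C) (Jac a p (xvec adj x))) lam ->
    complex.Re lam <= 0.

Definition Gx (x : T -> T -> R) : rel T := fun i j => 0 < x i j.

End Defs.

From HB Require Import structures.
From mathcomp Require Import all_boot all_order all_algebra.
From mathcomp Require Import all_classical all_reals all_analysis.
From mathcomp Require Import complex.
From mathcomp Require Import ring lra.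
From mathcomp Require Import spectral sesquilinear.
Set Implicit Arguments. Unset Strict Implicit. Unset Printing Implicit Defensive.
Import Order.TTheory GRing.Theory Num.Theory.
Import numFieldNormedType.Exports.
Local Open Scope ring_scope.

(* At an equilibrium x in Gamma_0 every edge ij of G_x has y_ij = H > 0.  In the
   edge coordinates z, the row of the Jacobian at an edge k of G_x is
   J_kl = H (delta_kl - z_k B_kl) - z_k g_l, with B_kl = sum of 1/x_w over the common
   endpoints w of k and l ([overlap]) and g = grad H; the rows of the other edges are
   diagonal.  As sum_l z_l B_kl = 2, the symmetric matrix Q = diag(+-1) - sqrt z B sqrt z
   satisfies Q sqrt z = - sqrt z, so an eigenvector phi of Q for an eigenvalue lam > 0 is
   orthogonal to sqrt z, and phi / sqrt z extends to a left eigenvector of J for the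
   eigenvalue H lam.  Linear stability thus makes the quadratic form of Q nonpositive.
   Testing it on two edges ub, bd of G_x with u <> d gives
   (1/x_ub - 1/x_u) + (1/x_bd - 1/x_d) <= 0, so x_u = x_ub; then y_ub = H reads
   a_ub p_ub = H x_b, and likewise a_bd p_bd = H x_b.  Hence a p is constant along the
   paths of G_x. *)

(** * Edge coordinates *)

Section TwoElementSets.
Variable T : finType.
Implicit Types i j u w : T.

Lemma eq_set2 i j u w : i != j ->
  ([set i; j] == [set u; w]) = ((u == i) && (w == j)) || ((u == j) && (w == i)).
Proof.
move=> ij; apply/eqP/idP => [/setP eq_ij_uw | /orP[] /andP[/eqP-> /eqP->] //].
  have := eq_ij_uw u; have := eq_ij_uw i; have := eq_ij_uw j.
  rewrite !inE !eqxx orbT /= => /esym jP /esym iP.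
  case/orP=> /eqP uE; subst u; rewrite eqxx /=.
    by move: jP; rewrite [j == i]eq_sym (negbTE ij) /= eq_sym => ->.
  by move: iP; rewrite (negbTE ij) /= eq_sym => ->; rewrite orbT.
exact: finset.setUC.
Qed.

Lemma sum_eq_set2 (R : pzSemiRingType) i j u : i != j ->
  \sum_w (([set i; j] == [set u; w])%:R : R) = (u \in [set i; j])%:R.
Proof.
move=> ij; rewrite !inE; have [-> | ui] /= := eqVneq u i.
  rewrite (bigD1 j) //= eqxx big1 ?addr0 // => w wj.
  by rewrite eq_set2 // (negbTE wj) (negbTE ij) andbF.
have [-> | uj] /= := eqVneq u j.
  rewrite (bigD1 i) //= eq_set2 // !eqxx orbT big1 ?addr0 // => w wi.
  by rewrite eq_set2 // (negbTE wi) eq_sym (negbTE ij) andbF.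
by rewrite big1 // => w _; rewrite eq_set2 // (negbTE ui) (negbTE uj).
Qed.

End TwoElementSets.

Section Edges.
Variables (R : realType) (T : finType) (adj : rel T).
Local Notation E := (@edge_set T adj).
Implicit Types (i j u w : T) (k l : 'I_(nE adj)).

Lemma edge_setP k : exists i j, adj i j /\ E k = [set i; j].
Proof.
have /existsP[i /existsP[j /andP[adj_ij /eqP Ek]]] := valP (enum_val k).
by exists i, j.
Qed.

Lemma edge_set_inj : injective E.
Proof. by move=> k l /val_inj /enum_val_inj. Qed.

Lemma edge_set_exists i j : adj i j -> exists k, E k = [set i; j].
Proof.
move=> adj_ij; have e_ij : is_edge adj [set i; j].
  by apply/existsP; exists i; apply/existsP; exists j; rewrite adj_ij eqxx.
by exists (enum_rank (exist (is_edge adj) _ e_ij : edge adj)); rewrite /edge_set enum_rankK.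
Qed.

Lemma at_edge_set2 (f : T -> T -> R) i j : i != j -> (forall u w, f u w = f w u) ->
  at_edge f [set i; j] = f i j.
Proof.
move=> ij fC; wlog lt_ij : i j ij / (enum_rank i < enum_rank j)%N.
  move=> wlog_ij.
  case: (ltngtP (enum_rank i) (enum_rank j)) => [|gt_ij|/val_inj/enum_rank_inj eq_ij].
  - exact: wlog_ij.
  - by rewrite finset.setUC fC; apply: wlog_ij; rewrite // eq_sym.
  - by rewrite eq_ij eqxx in ij.
rewrite /at_edge pair_big_dep /= (big_pred1 (i, j)) // => -[u w] /=.
rewrite eq_sym eq_set2 // xpair_eqE; have ji : j != i by rewrite eq_sym.
have [-> | ui] := eqVneq u i; have [-> | wj] := eqVneq w j.
- by rewrite lt_ij.
- by rewrite (negbTE ij).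
- by rewrite (negbTE ji) !andbF.
- by rewrite /=; case: eqP => [->|]; case: eqP => [->|] //=; rewrite ltnNge ltnW.
Qed.

Lemma zarrC (z : 'rV[R]_(nE adj)) i j : zarr z i j = zarr z j i.
Proof. by rewrite /zarr finset.setUC. Qed.

Lemma zarrE (z : 'rV[R]_(nE adj)) i j : zarr z i j = \sum_k (E k == [set i; j])%:R * z 0 k.
Proof. by rewrite /zarr big_mkcond; apply: eq_bigr => k _; case: eqP; rewrite ?mul1r ?mul0r. Qed.

Lemma zarr_edge (z : 'rV[R]_(nE adj)) k i j : E k = [set i; j] -> zarr z i j = z 0 k.
Proof.
move=> Ek; rewrite /zarr (big_pred1 k) // => l.
by rewrite -Ek; apply/eqP/eqP => [/edge_set_inj | ->].
Qed.

Lemma zarr_affine (z v : 'rV[R]_(nE adj)) (h : R) i j :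
  zarr (h *: v + z) i j = zarr z i j + h * zarr v i j.
Proof. by rewrite /zarr mulr_sumr -big_split; apply: eq_bigr => k _; rewrite !mxE addrC. Qed.

Lemma xv_zarr_affine (z v : 'rV[R]_(nE adj)) (h : R) u :
  xv (zarr (h *: v + z)) u = xv (zarr z) u + h * xv (zarr v) u.
Proof. by rewrite /xv mulr_sumr -big_split; apply: eq_bigr => w _; rewrite zarr_affine. Qed.

Lemma zarr_delta l i j : zarr (delta_mx 0 l : 'rV[R]_(nE adj)) i j = (E l == [set i; j])%:R.
Proof.
rewrite /zarr; have [<- | Eij] := eqVneq.
  by rewrite (big_pred1 l) ?mxE ?eqxx // => k; apply/eqP/eqP => [/edge_set_inj | ->].
by rewrite big1 // => k /eqP Ek; rewrite mxE andTb; case: eqP => // kl; rewrite -kl Ek eqxx in Eij.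
Qed.

Hypothesis adj_irr : forall i, ~~ adj i i.
Hypothesis adj_sym : forall i j, adj i j = adj j i.

Lemma edge_set_neq k i j : E k = [set i; j] -> i != j.
Proof.
have [u [w [adj_uw ->]]] := edge_setP k; move=> /setP eq_uw.
apply: contraTneq adj_uw => eq_ij; subst j.
have := eq_uw u; have := eq_uw w; rewrite !inE !eqxx orbT !orbb => /esym/eqP-> /esym/eqP->.
by rewrite adj_irr.
Qed.

Lemma edge_set_adj k i j : E k = [set i; j] -> adj i j.
Proof.
move=> Ek; have [u [w [adj_uw Ek']]] := edge_setP k.
move: (eqxx (E k)); rewrite {1}Ek' {1}Ek eq_set2 ?(edge_set_neq Ek') //.
by case/orP => /andP[/eqP-> /eqP->]; rewrite // adj_sym.
Qed.

Lemma xv_zarr_delta l u : xv (zarr (delta_mx 0 l : 'rV[R]_(nE adj))) u = (u \in E l)%:R.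
Proof.
have [i [j [_ El]]] := edge_setP l.
by rewrite /xv; under eq_bigr do rewrite zarr_delta El; rewrite sum_eq_set2 ?El ?(edge_set_neq El).
Qed.

Section SymmetricArray.
Variable x : T -> T -> R.
Hypothesis xC : forall i j, x i j = x j i.
Hypothesis x_adj : forall i j, ~~ adj i j -> x i j = 0.

Lemma xvec_edge k i j : E k = [set i; j] -> xvec adj x 0 k = x i j.
Proof. by move=> Ek; rewrite mxE Ek at_edge_set2 // (edge_set_neq Ek). Qed.

Lemma zarr_xvec i j : zarr (xvec adj x) i j = x i j.
Proof.
have [adj_ij | nadj_ij] := boolP (adj i j).
  by have [k Ek] := edge_set_exists adj_ij; rewrite (zarr_edge _ Ek) (xvec_edge Ek).
by rewrite x_adj // /zarr big1 // => k /eqP /edge_set_adj; rewrite (negbTE nadj_ij).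
Qed.

Lemma xv_zarr_xvec u : xv (zarr (xvec adj x)) u = xv x u.
Proof. by apply: eq_bigr => w _; rewrite zarr_xvec. Qed.

End SymmetricArray.

End Edges.

Arguments edge_set_inj {T adj}.

(** * The Jacobian in edge coordinates *)

Section DirectionalDerivatives.
Variables (R : realType) (V : normedModType R) (z v : V).
Implicit Types f g : V -> R.

Lemma is_derive_affine f (c : R) :
  (forall h, f (h *: v + z) = f z + h * c) -> is_derive z v f c.
Proof.
move=> f_affine.
have quotient_cst h : h != 0 -> h^-1 *: ((f \o shift z) (h *: v) - f z) = c.
  by move=> h0; rewrite /= f_affine addrC addKr [_ *: _]mulrA mulVf // mul1r.
split.
  by apply: (is_cvg_near_cst c); near=> h; apply: quotient_cst; near: h; exact: nbhs_dnbhs_neq.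
by apply: lim_near_cst => //; near=> h; apply: quotient_cst; near: h; exact: nbhs_dnbhs_neq.
Unshelve. all: by end_near.
Qed.

Lemma is_derive_mul f g df dg : is_derive z v f df -> is_derive z v g dg ->
  is_derive z v (fun y => f y * g y) (f z * dg + g z * df).
Proof. by move=> f' g'; have := is_deriveM f' g'. Qed.

Lemma is_derive_sub f g df dg : is_derive z v f df -> is_derive z v g dg ->
  is_derive z v (fun y => f y - g y) (df - dg).
Proof. by move=> f' g'; have := is_deriveB f' g'. Qed.

Lemma is_derive_inv f df : f z != 0 -> is_derive z v f df ->
  is_derive z v (fun y => (f y)^-1) (- (f z) ^- 2 * df).
Proof.
move=> fz0 f'; have [f_der _] := f'.
by have := derivableP (derivableV fz0 f_der); rewrite deriveV // derive_val.
Qed.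

Lemma is_derive_sum_cond (I : finType) (P : pred I) (F : I -> V -> R) (dF : I -> R) :
  (forall i, P i -> is_derive z v (F i) (dF i)) ->
  is_derive z v (fun y => \sum_(i | P i) F i y) (\sum_(i | P i) dF i).
Proof.
rewrite -fct_sumE => F'.
by elim/big_ind2: _ => // *; [exact: is_derive_cst | exact: is_deriveD].
Qed.

End DirectionalDerivatives.

Section Jacobian.
Variables (R : realType) (T : finType) (adj : rel T) (a p x : T -> T -> R).
Hypothesis adj_irr : forall i, ~~ adj i i.
Hypothesis adj_sym : forall i j, adj i j = adj j i.
Hypothesis aC : forall i j, a i j = a j i.
Hypothesis pC : forall i j, p i j = p j i.
Hypothesis xC : forall i j, x i j = x j i.
Hypothesis x_adj : forall i j, ~~ adj i j -> x i j = 0.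
Hypothesis xv_gt0 : forall i j, 0 < a i j * p i j -> 0 < xv x i.
Local Notation n := (nE adj).
Local Notation E := (@edge_set T adj).
Local Notation z0 := (xvec adj x).
Local Notation c i j := (a i j * p i j).

Let zarr_z0 i j : zarr z0 i j = x i j := zarr_xvec adj_irr adj_sym xC x_adj i j.
Let xv_z0 u : xv (zarr z0) u = xv x u := xv_zarr_xvec adj_irr adj_sym xC x_adj u.

Lemma xv_mul_neq0 i j : 0 < c i j -> xv x i * xv x j != 0.
Proof.
by move=> c_gt0; rewrite mulf_neq0 // gt_eqF // (xv_gt0 c_gt0, xv_gt0 (j := i)) // aC pC.
Qed.

Let xv_z0_mul_neq0 i j : 0 < c i j -> xv (zarr z0) i * xv (zarr z0) j != 0.
Proof. by rewrite !xv_z0; exact: xv_mul_neq0. Qed.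

Section Direction.
Variable v : 'rV[R]_n.

Lemma is_derive_zarr i j : is_derive z0 v (fun t => zarr t i j) (zarr v i j).
Proof. by apply: is_derive_affine => h; rewrite zarr_affine. Qed.

Lemma is_derive_xv_mul i j :
  is_derive z0 v (fun t => xv (zarr t) i * xv (zarr t) j)
    (xv x i * xv (zarr v) j + xv x j * xv (zarr v) i).
Proof.
have xv' u : is_derive z0 v (fun t => xv (zarr t) u) (xv (zarr v) u).
  by apply: is_derive_affine => h; rewrite xv_zarr_affine.
by have := is_derive_mul (xv' i) (xv' j); rewrite !xv_z0.
Qed.

Lemma is_derive_ys i j : 0 < c i j ->
  is_derive z0 v (fun t => ys a p t i j)
    (c i j * (zarr v i j * (xv x i * xv x j)
              - x i j * (xv x i * xv (zarr v) j + xv x j * xv (zarr v) i))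
     / (xv x i * xv x j) ^+ 2).
Proof.
move=> c_gt0; rewrite /ys c_gt0.
have := is_derive_mul (is_derive_mul (is_derive_cst (c i j) z0 v) (is_derive_zarr i j))
  (is_derive_inv (f := fun t => xv (zarr t) i * xv (zarr t) j) (xv_z0_mul_neq0 c_gt0)
     (is_derive_xv_mul i j)).
rewrite !xv_z0 zarr_z0 => ys'; apply: (is_derive_eq ys').
move: (xv_mul_neq0 c_gt0); rewrite mulf_eq0 negb_or => /andP[Xi Xj].
by rewrite /cst; field; rewrite Xi Xj.
Qed.

Lemma derivable_ys i j : derivable (fun t => ys a p t i j) z0 v.
Proof.
have [c_gt0 | c_le0] := boolP (0 < c i j); first by case: (is_derive_ys c_gt0).
suff : is_derive z0 v (fun t => ys a p t i j) 0 by case.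
by apply: is_derive_affine => h; rewrite /ys (negbTE c_le0) mulr0 addr0.
Qed.

Lemma derivable_Hs : derivable (Hs a p) z0 v.
Proof.
suff [d Hs'] : exists d, is_derive z0 v (Hs a p) d by case: Hs'.
eexists; apply: is_derive_sum_cond => i _; apply: is_derive_sum_cond => j c_gt0.
have term' := is_derive_mul (is_derive_mul (is_derive_cst (c i j) z0 v)
                 (is_derive_mul (is_derive_zarr i j) (is_derive_zarr i j)))
  (is_derive_inv (f := fun t => xv (zarr t) i * xv (zarr t) j) (xv_z0_mul_neq0 c_gt0)
     (is_derive_xv_mul i j)).
by under eq_fun do rewrite expr2; exact: term'.
Qed.

End Direction.

Lemma ysC (t : 'rV[R]_n) i j : ys a p t i j = ys a p t j i.
Proof. by rewrite /ys aC pC (zarrC t i j) [xv _ i * _]mulrC. Qed.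

Lemma Fs_edge (t : 'rV[R]_n) k i j : E k = [set i; j] ->
  Fs a p t 0 k = zarr t i j * (ys a p t i j - Hs a p t).
Proof.
move=> Ek; rewrite mxE Ek at_edge_set2 //; first exact: (edge_set_neq adj_irr Ek).
by move=> u w; rewrite zarrC ysC.
Qed.

Lemma is_derive_Fs_edge (v : 'rV[R]_n) k i j : E k = [set i; j] ->
  is_derive z0 v (fun t => Fs a p t 0 k)
    (x i j * ('D_v (fun t => ys a p t i j) z0 - 'D_v (Hs a p) z0)
     + (ys a p z0 i j - Hs a p z0) * zarr v i j).
Proof.
move=> Ek; have -> : (fun t => Fs a p t 0 k) = fun t => zarr t i j * (ys a p t i j - Hs a p t).
  by apply/funext => t; exact: Fs_edge.
have ys' : is_derive z0 v (fun t => ys a p t i j) ('D_v (fun t => ys a p t i j) z0).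
  by apply: derivableP; exact: derivable_ys.
have Hs' : is_derive z0 v (Hs a p) ('D_v (Hs a p) z0).
  by apply: derivableP; exact: derivable_Hs.
by have := is_derive_mul (is_derive_zarr v i j) (is_derive_sub ys' Hs'); rewrite zarr_z0.
Qed.

Lemma Jac_edge k l i j : E k = [set i; j] ->
  Jac a p z0 k l =
    x i j * ('D_(delta_mx 0 l) (fun t => ys a p t i j) z0
             - 'D_(delta_mx 0 l) (Hs a p) z0)
    + (ys a p z0 i j - Hs a p z0) * (k == l)%:R.
Proof.
move=> Ek; rewrite /Jac mxE derive_mx ?mxE; last first.
  apply/derivable_mxP => i' k'; rewrite (ord1 i').
  have [u [w [_ Ek']]] := edge_setP k'.
  by case: (is_derive_Fs_edge (delta_mx 0 l) Ek').
rewrite (@derive_val _ _ _ _ _ _ _ (is_derive_Fs_edge (delta_mx 0 l) Ek)) zarr_delta -Ek.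
by rewrite (inj_eq edge_set_inj) eq_sym.
Qed.

Definition overlap (k l : 'I_n) : R := \sum_(w in E k :&: E l) (xv x w)^-1.

Lemma overlapC k l : overlap k l = overlap l k.
Proof. by rewrite /overlap finset.setIC. Qed.

Lemma overlap_edge k l i j : E k = [set i; j] ->
  overlap k l = (i \in E l)%:R / xv x i + (j \in E l)%:R / xv x j.
Proof.
move=> Ek; have ij := edge_set_neq adj_irr Ek.
rewrite /overlap Ek (eq_bigl (fun w => (w \in [set i; j]) && (w \in E l))) => [|w]; last first.
  by rewrite !inE.
rewrite big_mkcondr big_setU1 /= ?big_set1 ?inE //.
by case: (i \in E l); case: (j \in E l); rewrite ?mul1r ?mul0r.
Qed.

Lemma sum_xvec_incident u : \sum_l z0 0 l * (u \in E l)%:R = xv x u.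
Proof.
rewrite /xv; under [RHS]eq_bigr => w _ do rewrite -zarr_z0 zarrE.
rewrite exchange_big /=; apply: eq_bigr => l _; rewrite -mulr_suml mulrC.
by have [i [j [_ El]]] := edge_setP l; rewrite El sum_eq_set2 -?El // (edge_set_neq adj_irr El).
Qed.

Lemma Jac_off_support k l : z0 0 k = 0 -> k != l -> Jac a p z0 k l = 0.
Proof.
have [i [j [_ Ek]]] := edge_setP k; rewrite (xvec_edge adj_irr xC Ek) => x0 kl.
by rewrite (Jac_edge l Ek) x0 mul0r add0r (negbTE kl) mulr0.
Qed.

Section AtEquilibrium.
Hypothesis weight_gt0 : forall i j, 0 < x i j -> 0 < c i j.
Hypothesis ys_eq : forall i j, 0 < x i j -> ys a p z0 i j = Hs a p z0.

Lemma xv_gt0_of_edge k i j : 0 < z0 0 k -> E k = [set i; j] -> 0 < xv x i /\ 0 < xv x j.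
Proof.
move=> z_gt0 Ek; have x_gt0 : 0 < x i j by rewrite -(xvec_edge adj_irr xC Ek).
split; first exact: xv_gt0 (weight_gt0 x_gt0).
by apply: (xv_gt0 (j := i)); rewrite aC pC weight_gt0.
Qed.

Lemma sum_xvec_overlap k : 0 < z0 0 k -> \sum_l z0 0 l * overlap k l = 2.
Proof.
have [i [j [_ Ek]]] := edge_setP k => /xv_gt0_of_edge /(_ Ek) [Xi Xj].
under eq_bigr do rewrite (overlap_edge _ Ek) mulrDr !mulrA.
by rewrite big_split -!mulr_suml /= !sum_xvec_incident !divff ?gt_eqF.
Qed.

Lemma Jac_support k l : 0 < z0 0 k ->
  Jac a p z0 k l = Hs a p z0 * ((k == l)%:R - z0 0 k * overlap k l)
                   - z0 0 k * 'D_(delta_mx 0 l) (Hs a p) z0.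
Proof.
have [i [j [_ Ek]]] := edge_setP k => z_gt0.
have [Xi Xj] := xv_gt0_of_edge z_gt0 Ek.
rewrite (xvec_edge adj_irr xC Ek) in z_gt0 *.
have c_gt0 := weight_gt0 z_gt0.
rewrite (Jac_edge l Ek) ys_eq // subrr mul0r addr0.
rewrite (@derive_val _ _ _ _ _ _ _ (is_derive_ys (delta_mx 0 l) c_gt0)).
rewrite -(ys_eq z_gt0) /ys c_gt0 (overlap_edge _ Ek) zarr_delta !(xv_zarr_delta R adj_irr) -Ek.
rewrite (inj_eq edge_set_inj) [l == k]eq_sym zarr_z0 !xv_z0.
by field; rewrite !gt_eqF.
Qed.


End AtEquilibrium.

End Jacobian.

(** * Matrices of the shape of the Jacobian *)

Section RealSymmetricForm.
Variables (R : realType) (n : nat).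
Local Notation C := R[i].
Local Notation toC := (real_complex R).

Lemma conj_real (r : R) : Num.conj (toC r) = toC r.
Proof. by rewrite /Num.conj /= oppr0. Qed.

Lemma Re_sum (I : finType) (F : I -> C) : complex.Re (\sum_i F i) = \sum_i complex.Re (F i).
Proof. by apply: (big_morph _ (fun x y => _) _) => [[? ?] [? ?]|]. Qed.

Lemma Re_mul_conj (c d : C) :
  complex.Re (c * d * Num.conj c) = complex.Re d * (complex.Re c ^+ 2 + complex.Im c ^+ 2).
Proof. by case: c => a b; case: d => e f; rewrite /Num.conj /=; ring. Qed.

Lemma form_spectral (A : 'M[C]_n) (f : 'rV[C]_n) : A \is normalmx ->
  (f *m A *m f^t*%sesqui) 0 0 =
  \sum_j (f *m (spectralmx A)^t*%sesqui) 0 j * spectral_diag A 0 j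
         * Num.conj ((f *m (spectralmx A)^t*%sesqui) 0 j).
Proof.
move=> /orthomx_spectralP AE; rewrite [in LHS]AE invmx_unitary ?spectral_unitarymx //.
rewrite !mulmxA -mulmxA; set c := f *m (spectralmx A)^t*%sesqui.
have -> : spectralmx A *m f^t*%sesqui = c^t*%sesqui by rewrite /c trmx_mul map_mxM trmxCK.
by rewrite mul_mx_diag mxE; apply: eq_bigr => j _; rewrite !mxE.
Qed.

Lemma sym_form_gt0_eigenvector (Q : 'M[R]_n) (f : 'rV[R]_n) :
  Q^T = Q -> 0 < (f *m Q *m f^T) 0 0 ->
  exists2 lam : C, 0 < complex.Re lam &
    exists2 phi : 'rV[C]_n, phi != 0 & phi *m map_mx toC Q = lam *: phi.
Proof.
move=> QT f_gt0; set A := map_mx toC Q.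
have AT : A^t*%sesqui = A by apply/matrixP => i j; rewrite !mxE conj_real -[in RHS]QT mxE.
have A_normal : A \is normalmx by apply/normalmxP; rewrite AT.
set P := spectralmx A; set d := spectral_diag A.
have P_unitary : P *m P^t*%sesqui = 1%:M by apply/unitarymxP/spectral_unitarymx.
have [i d_gt0] : exists i, 0 < complex.Re (d 0 i).
  apply/existsP; apply: contraTT f_gt0; rewrite negb_exists => /forallP d_le0.
  have := congr1 (@complex.Re R) (form_spectral (map_mx toC f) A_normal).
  have -> : (map_mx toC f)^t*%sesqui = map_mx toC f^T.
    by apply/matrixP => k l; rewrite !mxE conj_real.
  rewrite -!map_mxM mxE /= Re_sum => ->; rewrite -leNgt -oppr_ge0 -sumrN.
  apply: sumr_ge0 => j _; rewrite Re_mul_conj oppr_ge0 mulr_le0_ge0 ?addr_ge0 ?sqr_ge0 //.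
  by rewrite leNgt d_le0.
exists (d 0 i) => //; exists (row i P).
  apply/eqP => Pi0; have := congr1 (row i) P_unitary.
  by rewrite row_mul Pi0 mul0mx => /rowP /(_ i); rewrite !mxE eqxx => /eqP; rewrite eq_sym oner_eq0.
have PA : P *m A = diag_mx d *m P.
  rewrite [in LHS](orthomx_spectralP A_normal) invmx_unitary ?spectral_unitarymx //.
  by rewrite !mulmxA P_unitary mul1mx.
have := congr1 (row i) PA; rewrite row_mul => ->.
by apply/rowP => j; rewrite mul_diag_mx !mxE.
Qed.

End RealSymmetricForm.

Lemma sum_delta_mul (S : pzSemiRingType) (I : finType) (F : I -> S) j :
  \sum_i (i == j)%:R * F i = F j.
Proof. by rewrite (bigD1 j) //= eqxx mul1r big1 ?addr0 // => i /negbTE ->; rewrite mul0r. Qed.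

Lemma eigenvalue_diag_row (F : fieldType) (n : nat) (M : 'M[F]_n) l :
  (forall m, m != l -> M l m = 0) -> eigenvalue M (M l l).
Proof.
move=> row_l; apply/eigenvalueP; exists (delta_mx 0 l); last first.
  by apply/eqP => /matrixP /(_ 0 l); rewrite !mxE !eqxx => /eqP; rewrite oner_eq0.
apply/rowP => m; rewrite -rowE !mxE eqxx /=.
by have [-> | ml] := eqVneq m l; [rewrite mulr1 | rewrite mulr0 row_l].
Qed.

Lemma form_delta2 (S : comNzRingType) (n : nat) (Q : 'M[S]_n) (e f : 'I_n) (al be : S) :
  ((al *: (delta_mx 0 e : 'rV[S]_n) + be *: delta_mx 0 f) *m Q
     *m (al *: (delta_mx 0 e : 'rV[S]_n) + be *: delta_mx 0 f)^T) 0 0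
  = al ^+ 2 * Q e e + al * be * (Q e f + Q f e) + be ^+ 2 * Q f f.
Proof.
have delta_form (k l : 'I_n) :
    ((delta_mx 0 k : 'rV[S]_n) *m Q *m (delta_mx 0 l : 'rV[S]_n)^T) 0 0 = Q k l.
  by rewrite trmx_delta -rowE -colE !mxE.
have addE (A B : 'M[S]_1) : (A + B) 0 0 = A 0 0 + B 0 0 by rewrite mxE.
have scaleE (k : S) (A : 'M[S]_1) : (k *: A) 0 0 = k * A 0 0 by rewrite mxE.
rewrite linearD /= !linearZ /= !mulmxDl !mulmxDr -!scalemxAl -!scalemxAr.
by rewrite !addE !scaleE !delta_form; ring.
Qed.

Section ReplicatorShapedMatrix.
Variables (R : realType) (n : nat).
Local Notation C := R[i].
Local Notation toC := (real_complex R).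
Variables (J : 'M[R]_n) (z : 'I_n -> R) (B : 'I_n -> 'I_n -> R) (H : R) (g : 'I_n -> R).
Hypothesis z_ge0 : forall k, 0 <= z k.
Hypothesis H_gt0 : 0 < H.
Hypothesis J_support : forall k l, 0 < z k ->
  J k l = H * ((k == l)%:R - z k * B k l) - z k * g l.
Hypothesis J_off_support : forall k l, z k = 0 -> k != l -> J k l = 0.
Hypothesis BC : forall k l, B k l = B l k.
Hypothesis sum_zB : forall k, 0 < z k -> \sum_l z l * B k l = 2.

Local Notation sq k := (Num.sqrt (z k)).

(* The sign -1 off the support of z forces the eigenvectors of positive
   eigenvalue to vanish there. *)
Definition supp_sign k : R := if 0 < z k then 1 else -1.

Definition stab_form : 'M[R]_n :=
  \matrix_(k, l) ((k == l)%:R * supp_sign k - sq k * sq l * B k l).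

Lemma z_gt0_or_eq0 k : 0 < z k \/ z k = 0.
Proof. by have := z_ge0 k; rewrite le_eqVlt => /orP[/eqP <-|]; [right | left]. Qed.

Lemma sq_neq0 k : 0 < z k -> sq k != 0.
Proof. by move=> z_gt0; rewrite gt_eqF // sqrtr_gt0. Qed.

Lemma stab_formT : stab_form^T = stab_form.
Proof.
apply/matrixP => k l; rewrite !mxE [B l k]BC [l == k]eq_sym.
by case: eqVneq => [-> | _] //; rewrite !mul0r [sq l * _]mulrC.
Qed.

Lemma stab_form_sqrt k : \sum_l stab_form k l * sq l = - sq k.
Proof.
transitivity (\sum_l (l == k)%:R * (supp_sign k * sq l) - sq k * \sum_l z l * B k l).
  rewrite mulr_sumr -sumrB; apply: eq_bigr => l _; rewrite mxE eq_sym.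
  have sq2 : sq l * sq l = z l by rewrite -expr2 sqr_sqrtr.
  by move: (sq l) sq2 => s <-; ring.
rewrite sum_delta_mul.
rewrite /supp_sign; case: (z_gt0_or_eq0 k) => [z_gt0 | ->].
  by rewrite z_gt0 sum_zB //; ring.
by rewrite sqrtr0; ring.
Qed.

Definition diagJ k := if 0 < z k then H else J k k.

Lemma J_decomp k l : J k l = (k == l)%:R * diagJ k - z k * (H * B k l + g l).
Proof.
rewrite /diagJ; case: (z_gt0_or_eq0 k) => [z_gt0 | z0]; first by rewrite z_gt0 J_support //; ring.
rewrite z0 ltxx mul0r subr0; case: eqVneq => [-> | kl]; first by rewrite mul1r.
by rewrite mul0r J_off_support.
Qed.

Section PositiveEigenvector.
Variables (lam : C) (phi : 'rV[C]_n).
Hypothesis lam_gt0 : 0 < complex.Re lam.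
Hypothesis phi_neq0 : phi != 0.
Hypothesis phi_eig : phi *m map_mx toC stab_form = lam *: phi.

Let r l := \sum_k phi 0 k * toC (sq k) * toC (B k l).
Let mu := toC H * lam.

Lemma lam_add1_neq0 : lam + 1 != 0.
Proof.
apply: contraTneq lam_gt0 => /(congr1 (@complex.Re R)).
by case: lam => [re im] /= /eqP; rewrite addr_eq0 => /eqP ->; rewrite -leNgt lerN10.
Qed.

Lemma eigenvector_entry l : phi 0 l * toC (supp_sign l) - toC (sq l) * r l = lam * phi 0 l.
Proof.
have := congr1 (fun M : 'rV[C]_n => M 0 l) phi_eig; rewrite !mxE => <-.
rewrite /r mulr_sumr -[X in X - _](sum_delta_mul (fun k => phi 0 k * toC (supp_sign k))) -sumrB.
by apply: eq_bigr => k _; rewrite !mxE !rmorphB !rmorphM rmorph_nat; ring.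
Qed.

Lemma eigenvector_off_support l : z l = 0 -> phi 0 l = 0.
Proof.
move=> z0; have := eigenvector_entry l; rewrite /supp_sign z0 ltxx sqrtr0 !rmorph0 mul0r subr0.
rewrite rmorphN rmorph1 => phi_l; apply/eqP; rewrite -(mulrI_eq0 _ (lregP lam_add1_neq0)).
by rewrite mulrDl mul1r -phi_l mulrN1 addNr.
Qed.

Lemma eigenvector_orthogonal : \sum_k phi 0 k * toC (sq k) = 0.
Proof.
set S := \sum_k _; suff : (lam + 1) * S = 0.
  by move/eqP; rewrite mulf_eq0 (negbTE lam_add1_neq0) => /eqP.
have lamS : \sum_l (phi *m map_mx toC stab_form) 0 l * toC (sq l) = lam * S.
  by rewrite phi_eig mulr_sumr; apply: eq_bigr => l _; rewrite !mxE mulrA.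
have negS : \sum_l (phi *m map_mx toC stab_form) 0 l * toC (sq l) = - S.
  under eq_bigr do rewrite mxE mulr_suml.
  rewrite exchange_big /= /S -sumrN; apply: eq_bigr => k _.
  rewrite -[RHS]mulrN -rmorphN -stab_form_sqrt rmorph_sum mulr_sumr.
  by apply: eq_bigr => l _; rewrite !mxE rmorphM mulrA.
by rewrite mulrDl mul1r -lamS negS addrC subrr.
Qed.

Lemma eigenvector_support l : 0 < z l -> r l = (1 - lam) * (phi 0 l / toC (sq l)).
Proof.
move=> z_gt0; have sq0 : toC (sq l) != 0 by rewrite (inj_eq (@complexI R)) sq_neq0.
apply: (mulfI sq0); have := eigenvector_entry l; rewrite /supp_sign z_gt0 rmorph1 mulr1.
move=> phi_l; have -> : toC (sq l) * r l = (1 - lam) * phi 0 l by rewrite mulrBl mul1r -phi_l; ring.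
by field.
Qed.

Lemma eigenvalue_left_eigenvector :
  (forall l, z l = 0 -> toC (J l l) != mu) -> eigenvalue (map_mx toC J) mu.
Proof.
(* Off the support of z, U_l is solved from the l-th column equation, which needs
   mu <> J_ll there. *)
move=> mu_off; pose U := \row_l (if 0 < z l then phi 0 l / toC (sq l)
                                 else - (toC H * r l) / (mu - toC (J l l))).
have Uz k : U 0 k * toC (z k) = phi 0 k * toC (sq k).
  rewrite mxE; case: (z_gt0_or_eq0 k) => [z_gt0 | z0]; last by rewrite z0 sqrtr0 rmorph0 !mulr0.
  have sq2 : toC (sq k) * toC (sq k) = toC (z k) by rewrite -rmorphM -expr2 sqr_sqrtr.
  by rewrite z_gt0 -sq2; field; rewrite (inj_eq (@complexI R)) sq_neq0.
apply/eigenvalueP; exists U.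
  apply/rowP => l; rewrite [LHS]mxE [RHS]mxE.
  transitivity (U 0 l * toC (diagJ l) - toC H * r l - toC (g l) * \sum_k phi 0 k * toC (sq k)).
    transitivity (\sum_k ((k == l)%:R * (U 0 k * toC (diagJ k))
        - toC H * (U 0 k * toC (z k) * toC (B k l)) - toC (g l) * (U 0 k * toC (z k)))).
      apply: eq_bigr => k _; have -> : map_mx toC J k l = toC (J k l) by rewrite mxE.
      rewrite J_decomp !rmorphB !rmorphM rmorphD !rmorphM rmorph_nat.
      ring.
    rewrite !sumrB sum_delta_mul -!mulr_sumr.
    by congr (_ - _ * _ - _ * _); apply: eq_bigr => k _; rewrite Uz.
  rewrite eigenvector_orthogonal mulr0 subr0 mxE /diagJ.
  case: (z_gt0_or_eq0 l) => [z_gt0 | z0].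
    by rewrite z_gt0 eigenvector_support // /mu; field; rewrite (inj_eq (@complexI R)) sq_neq0.
  rewrite z0 ltxx; field; rewrite subr_eq0 eq_sym; exact: mu_off.
apply: contra_neq phi_neq0 => U0; apply/rowP => k; rewrite mxE.
case: (z_gt0_or_eq0 k) => [z_gt0 | z0]; last exact: eigenvector_off_support.
have := Uz k; rewrite U0 mxE mul0r => /esym/eqP.
by rewrite mulf_eq0 (inj_eq (@complexI R)) (negbTE (sq_neq0 z_gt0)) orbF => /eqP.
Qed.

End PositiveEigenvector.

Lemma stab_form_gt0_unstable (f : 'rV[R]_n) : 0 < (f *m stab_form *m f^T) 0 0 ->
  exists2 mu : C, 0 < complex.Re mu & eigenvalue (map_mx toC J) mu.
Proof.
case/(sym_form_gt0_eigenvector stab_formT) => lam lam_gt0 [phi phi_neq0 phi_eig].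
exists (toC H * lam).
  by case: lam lam_gt0 {phi_eig} => re im /= re_gt0; rewrite mul0r subr0 mulr_gt0.
have [/existsP[l /andP[/eqP z0 /eqP <-]] | mu_off] :=
  boolP [exists l, (z l == 0) && (toC (J l l) == toC H * lam)].
  have := @eigenvalue_diag_row _ _ (map_mx toC J) l; rewrite mxE; apply => m ml.
  by rewrite mxE J_off_support 1?eq_sym ?rmorph0.
apply: eigenvalue_left_eigenvector lam_gt0 phi_neq0 phi_eig _ => l z0.
by apply: contraNneq mu_off => Jl; apply/existsP; exists l; rewrite z0 Jl !eqxx.
Qed.

Lemma stab_form_pair e f : e != f -> 0 < z e -> 0 < z f ->
  (((sq e)^-1 *: (delta_mx 0 e : 'rV[R]_n) - (sq f)^-1 *: delta_mx 0 f) *m stab_form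
     *m ((sq e)^-1 *: (delta_mx 0 e : 'rV[R]_n) - (sq f)^-1 *: delta_mx 0 f)^T) 0 0
  = (z e)^-1 + (z f)^-1 - B e e - B f f + 2 * B e f.
Proof.
move=> ef ze_gt0 zf_gt0; rewrite -!scaleNr form_delta2 !mxE !eqxx (negbTE ef) eq_sym (negbTE ef).
rewrite /supp_sign ze_gt0 zf_gt0 [B f e]BC.
have ze : z e = sq e ^+ 2 by rewrite sqr_sqrtr ?z_ge0.
have zf : z f = sq f ^+ 2 by rewrite sqr_sqrtr ?z_ge0.
move: (sq_neq0 ze_gt0) (sq_neq0 zf_gt0) ze zf; move: (sq e) (sq f) => se sf se0 sf0 -> ->.
by rewrite /= ?mulr1n ?mulr0n; field; rewrite se0 sf0.
Qed.

End ReplicatorShapedMatrix.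

(** * Stable equilibria *)

Lemma psumr2_gt0 (R : numDomainType) (I J : finType) (P : I -> pred J) (F : I -> J -> R) :
  (forall i j, P i j -> 0 <= F i j) ->
  (0 < \sum_i \sum_(j | P i j) F i j) = [exists i, exists j, P i j && (0 < F i j)].
Proof.
move=> F_ge0; have inner_ge0 i : 0 <= \sum_(j | P i j) F i j.
  by apply: sumr_ge0 => j; apply: F_ge0.
have inner_gt0 i : (0 < \sum_(j | P i j) F i j) = [exists j, P i j && (0 < F i j)].
  rewrite lt_def inner_ge0 andbT psumr_neq0 => [|j]; last exact: F_ge0.
  by apply/hasP/existsP => [[j _ ij] | [j ij]]; exists j; rewrite ?mem_index_enum.
rewrite lt_def sumr_ge0 // andbT psumr_neq0 //.
apply/hasP/existsP => [[i _ /=] | [i ij]]; first by rewrite inner_gt0; exists i.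
by exists i; rewrite ?mem_index_enum //= inner_gt0.
Qed.

Section StableEquilibrium.
Variables (R : realType) (T : finType) (adj : rel T) (a p x : T -> T -> R) (h1 : R).
Hypothesis graph : simple_graph adj.
Hypothesis weights : weights_ok adj a p.
Hypothesis h1_gt0 : 0 < h1.
Hypothesis x_stable : inGammaS adj a p h1 x.
Local Notation c i j := (a i j * p i j).
Local Notation z0 := (xvec adj x).
Local Notation E := (@edge_set T adj).

Let adj_irr : forall i, ~~ adj i i := graph.1.
Let adj_sym : forall i j, adj i j = adj j i := graph.2.
Let aC : forall i j, a i j = a j i. Proof. by case: weights => -[]. Qed.
Let pC : forall i j, p i j = p j i. Proof. by case: weights => _ []. Qed.
Let weight_ge0 i j : 0 <= c i j.
Proof. by case: weights => -[_ a_ge0 _] [_ p01 _ _]; rewrite mulr_ge0 // (andP (p01 i j)).1. Qed.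
Let x_delta : inDelta adj a p h1 x. Proof. by case: x_stable => -[[]]. Qed.
Let xC : forall i j, x i j = x j i. Proof. by case: x_delta. Qed.
Let x_ge0 : forall i j, 0 <= x i j. Proof. by case: x_delta. Qed.
Let x_adj : forall i j, ~~ adj i j -> x i j = 0. Proof. by case: x_delta. Qed.
Let zarr_z0 i j : zarr z0 i j = x i j := zarr_xvec adj_irr adj_sym xC x_adj i j.
Let xv_z0 u : xv (zarr z0) u = xv x u := xv_zarr_xvec adj_irr adj_sym xC x_adj u.

Lemma xv_ge0 i : 0 <= xv x i.
Proof. by apply: sumr_ge0 => j _; apply: x_ge0. Qed.

Lemma x_le_xv i j : x i j <= xv x i.
Proof. by rewrite /xv (bigD1 j) //= lerDl sumr_ge0 // => w _; apply: x_ge0. Qed.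

Lemma xv_gt0 i j : 0 < c i j -> 0 < xv x i.
Proof.
move=> c_gt0; rewrite lt_def xv_ge0 andbT; apply/eqP => xv0.
case: x_stable => -[_ not_boundary] _; apply: not_boundary; exists i; split; first by exists j.
by rewrite big1 // => w _; apply: (psumr_eq0P _ xv0) => // ? _; apply: x_ge0.
Qed.

Lemma Hf_gt0 : 0 < Hf a p x.
Proof.
have [i [j [c_gt0 x_gt0]]] : exists i j, 0 < c i j /\ 0 < x i j.
  have : 0 < \sum_i \sum_(j | 0 < c i j) x i j by case: x_delta => _ _ _ _; apply: lt_le_trans.
  rewrite psumr2_gt0 => [/existsP[i /existsP[j /andP[]]] | i j _]; last exact: x_ge0.
  by exists i, j.
rewrite /Hf psumr2_gt0 => [|i' j' _]; last first.
  by apply: divr_ge0; apply: mulr_ge0; rewrite ?weight_ge0 ?sqr_ge0 ?xv_ge0.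
apply/existsP; exists i; apply/existsP; exists j; rewrite x_gt0 /=.
apply: divr_gt0; first by rewrite mulr_gt0 // exprn_gt0.
by apply: mulr_gt0; [exact: xv_gt0 c_gt0 | apply: (xv_gt0 (j := i)); rewrite aC pC].
Qed.

Lemma yf_eq_Hf i j : 0 < x i j -> yf a p x i j = Hf a p x.
Proof.
move=> x_gt0; case: x_stable => -[[_ F0] _] _; have := F0 i j.
by rewrite /Ff gt_eqF // => /eqP; rewrite mulf_eq0 gt_eqF //= subr_eq0 => /eqP.
Qed.

Lemma weight_gt0 i j : 0 < x i j -> 0 < c i j.
Proof.
move=> x_gt0; have := yf_eq_Hf x_gt0; rewrite /yf; case: ifP => // _ Hf0.
by move: Hf_gt0; rewrite -Hf0 ltxx.
Qed.

Lemma Hs_xvec : Hs a p z0 = Hf a p x.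
Proof.
apply: eq_bigr => i _; rewrite [LHS]big_mkcond [RHS]big_mkcond; apply: eq_bigr => j _.
rewrite zarr_z0 !xv_z0.
have [x_gt0 | x_le0] := boolP (0 < x i j); first by rewrite weight_gt0.
have -> : x i j = 0 by apply/eqP; rewrite eq_le x_ge0 andbT leNgt.
by case: ifP; rewrite // expr0n mulr0 mul0r.
Qed.

Lemma ys_xvec i j : 0 < x i j -> ys a p z0 i j = Hs a p z0.
Proof.
move=> x_gt0; rewrite Hs_xvec -(yf_eq_Hf x_gt0) /ys /yf.
by rewrite zarr_z0 !xv_z0.
Qed.

Lemma z0_ge0 k : 0 <= z0 0 k.
Proof. by have [i [j [_ Ek]]] := edge_setP k; rewrite (xvec_edge adj_irr xC Ek). Qed.

Lemma stab_form_le0 (f : 'rV[R]_(nE adj)) :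
  (f *m stab_form (fun k => z0 0 k) (overlap x) *m f^T) 0 0 <= 0.
Proof.
rewrite leNgt; apply/negP => form_gt0.
have H_gt0 : 0 < Hs a p z0 by rewrite Hs_xvec Hf_gt0.
have J_supp := Jac_support adj_irr adj_sym aC pC xC x_adj xv_gt0 weight_gt0 ys_xvec.
have J_off := Jac_off_support adj_irr adj_sym aC pC xC x_adj xv_gt0.
have sum_zB := sum_xvec_overlap adj_irr adj_sym aC pC xC x_adj xv_gt0 weight_gt0.
have [mu mu_gt0] :=
  stab_form_gt0_unstable z0_ge0 H_gt0 J_supp J_off (@overlapC _ _ _ x) sum_zB form_gt0.
by case: x_stable => _ /[apply]; rewrite leNgt mu_gt0.
Qed.

Lemma xv_eq_of_path2 (e f : 'I_(nE adj)) u b d :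
  E e = [set u; b] -> E f = [set b; d] -> u != d -> 0 < x u b -> 0 < x b d ->
  xv x u = x u b.
Proof.
move=> Ee Ef ud x_ub x_bd.
have ub := edge_set_neq adj_irr Ee; have bd := edge_set_neq adj_irr Ef.
have ef : e != f.
  apply: contra_neq ud => ef; move: Ee; rewrite ef Ef => /setP /(_ u).
  by rewrite !inE eqxx (negbTE ub) /= => /eqP.
have [ze zf] := (xvec_edge adj_irr xC Ee, xvec_edge adj_irr xC Ef).
have := stab_form_le0
  ((Num.sqrt (z0 0 e))^-1 *: delta_mx 0 e - (Num.sqrt (z0 0 f))^-1 *: delta_mx 0 f).
rewrite (stab_form_pair z0_ge0 (@overlapC _ _ _ x)) ?ze ?zf //.
rewrite !(overlap_edge x adj_irr _ Ee) !(overlap_edge x adj_irr _ Ef) Ee Ef !inE !eqxx.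
rewrite (negbTE ub) (negbTE ud) !orbT /=.
have Xu : 0 < xv x u := xv_gt0 (weight_gt0 x_ub).
have Xb : 0 < xv x b by apply: (xv_gt0 (j := u)); rewrite aC pC weight_gt0.
have Xd : 0 < xv x d by apply: (xv_gt0 (j := b)); rewrite aC pC weight_gt0.
have inv_u : (xv x u)^-1 <= (x u b)^-1 by rewrite lef_pV2 ?posrE ?x_le_xv.
have inv_d : (xv x d)^-1 <= (x b d)^-1 by rewrite lef_pV2 ?posrE // xC x_le_xv.
move=> form_le0; apply/eqP; rewrite eq_le x_le_xv andbT -lef_pV2 ?posrE //.
lra.
Qed.

Lemma weight_of_path2 u b d : u != d -> 0 < x u b -> 0 < x b d ->
  c u b = Hs a p z0 * xv x b.
Proof.
move=> ud x_ub x_bd; have x_adj_gt0 i j : 0 < x i j -> adj i j.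
  by move=> x_gt0; apply: contraTT x_gt0 => /x_adj ->; rewrite ltxx.
have [e Ee] := edge_set_exists (x_adj_gt0 _ _ x_ub).
have [f Ef] := edge_set_exists (x_adj_gt0 _ _ x_bd).
have Xb : xv x b != 0 by rewrite gt_eqF // (xv_gt0 (j := u)) // aC pC weight_gt0.
have := ys_xvec x_ub; rewrite /ys weight_gt0 // zarr_z0 !xv_z0 (xv_eq_of_path2 Ee Ef) // => <-.
by field; rewrite Xb gt_eqF.
Qed.

Lemma weight_at_vertex i j l : 0 < x i j -> 0 < x i l -> c i j = c i l.
Proof.
have [-> // | jl] := eqVneq j l; move=> x_ij x_il.
have [x_ji x_li] : 0 < x j i /\ 0 < x l i by rewrite !(xC _ i).
rewrite [a i j]aC [p i j]pC [a i l]aC [p i l]pC (weight_of_path2 jl x_ji x_il).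
by rewrite (weight_of_path2 _ x_li x_ij) // eq_sym.
Qed.

Lemma weight_connect i j k l : connect (Gx x) i k -> 0 < x i j -> 0 < x k l ->
  c i j = c k l.
Proof.
move=> /connectP[q]; elim: q i j => [|v q IHq] i j /=.
  by move=> _ ->; exact: weight_at_vertex.
move=> /andP[x_iv path_q] k_last x_ij x_kl.
have x_vi : 0 < x v i by rewrite xC.
by rewrite (weight_at_vertex x_ij x_iv) [a i v]aC [p i v]pC (IHq v i path_q k_last).
Qed.

End StableEquilibrium.

Theorem lemma10 (R : realType) (T : finType) (adj : rel T)
    (a p : T -> T -> R) (h1 : R) (x : T -> T -> R) :
  simple_graph adj ->
  weights_ok adj a p ->
  0 < h1 <= 1 ->
  inGammaS adj a p h1 x ->
  forall i j k l : T,
    connect (Gx x) i j -> connect (Gx x) i k -> connect (Gx x) i l ->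
    0 < x i j -> 0 < x k l ->
    a i j * p i j = a k l * p k l.
Proof.
move=> graph weights /andP[h1_gt0 _] x_stable i j k l _ x_ik _ x_ij x_kl.
exact: weight_connect graph weights h1_gt0 x_stable i j k l x_ik x_ij x_kl.
Qed.
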